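(* If a polynomial $f \in \mathbb{N}_0[x^{\pm 1}]$ is hyper-monolithic, then $f$ is monolithic.
   Context: $\mathbb{N}_0[x^{\pm 1}]$ denotes the semiring of Laurent polynomials in $x$ with nonnegative integer coefficients; $\operatorname{supp}(f)$ is the set of exponents occurring in $f$ with nonzero coefficient. A nonzero $f$ is monolithic if whenever $f = gh$ with $g,h \in \mathbb{N}_0[x^{\pm 1}]$, one of $g, h$ is a monomial $c x^k$ ($c$ a positive integer, $k\in\mathbb{Z}$). Writing $f = \sum_{i=0}^{n} c_i x^{k_i}$ with $c_i$ positive integers and $k_0 > \cdots > k_n$, $f$ is hyper-monolithic if $|\operatorname{supp}(f)| > 1$ and either $k_0 - k_1 < k_i - k_{i+1}$ for every $i \in \{1,\ldots,n-1\}$, or $k_{n-1} - k_n < k_j - k_{j+1}$ for every $j \in \{0,\ldots,n-2\}$. *)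

From HB Require Import structures.
From mathcomp Require Import all_boot all_order all_algebra.
Set Implicit Arguments. Unset Strict Implicit. Unset Printing Implicit Defensive.
Import Order.TTheory GRing.Theory Num.Theory.

(* Laurent polynomials with nonnegative integer coefficients, N_0[x^{+-1}].
   Every such Laurent polynomial can be written x^e * p(x) with e : int and
   p : {poly nat}; we represent it by the pair (e, p).  Two representations
   denote the same Laurent polynomial iff their coefficient functions agree
   (lcoef below), so all notions are stated up to this extensional equality. *)
Record laurent := Laurent { lshift : int ; lpoly : {poly nat} }.

Definition lcoef (f : laurent) (k : int) : nat :=
  match k - lshift f with
  | Posz i => (lpoly f)`_i
  | Negz _ => 0%N
  end%R.

Definition lmul (g h : laurent) : laurent :=
  Laurent (lshift g + lshift h)%R (lpoly g * lpoly h)%R.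

Definition is_monomial (f : laurent) : Prop :=
  exists (c : nat) (k : int), (0 < c)%N /\
    forall i : int, lcoef f i = (if i == k then c else 0%N).

Definition lnonzero (f : laurent) : Prop := exists k : int, lcoef f k != 0%N.

Definition monolithic (f : laurent) : Prop :=
  lnonzero f /\
  forall g h : laurent, (forall k : int, lcoef f k = lcoef (lmul g h) k) ->
    is_monomial g \/ is_monomial h.

(* support of f, listed in strictly decreasing order k_0 > k_1 > ... > k_n *)
Definition lsupp (f : laurent) : seq int :=
  rev (map (fun i : nat => (lshift f + i%:Z)%R)
         (filter (fun i : nat => ((lpoly f)`_i)%R != 0%N) (iota 0 (size (lpoly f))))).

Definition hyper_monolithic (f : laurent) : Prop :=
  let ks := lsupp f in
  let m := size ks in
  (1 < m)%N /\
  ((forall i : nat, (1 <= i)%N -> (i.+1 < m)%N ->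
      (nth 0 ks 0 - nth 0 ks 1 < nth 0 ks i - nth 0 ks i.+1)%R)
   \/
   (forall j : nat, (j.+2 < m)%N ->
      (nth 0 ks (m - 2) - nth 0 ks (m - 1) < nth 0 ks j - nth 0 ks j.+1)%R)).

(* If f = g h with neither factor a monomial, the support of f is the sumset
   of the supports of g and h, each having at least two points b1 < b2 (resp.
   a1 < a2).  Write the top exponent as k0 = a' + b' and the next one as
   k1 = a + b; then a < a' or b < b'.  If a < a', the exponents a' + b1 > a + b1
   of f lie strictly below k0 and differ by a' - a <= k0 - k1, because
   a' + b <= k0; the case b < b' is symmetric.  Hence some gap between
   consecutive exponents below k0 is at most k0 - k1, against the first
   alternative of hyper-monolithicity; the second alternative is the mirror
   image under k |-> -k. *)

From Pilot Require Import Defs.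
From mathcomp Require Import all_boot all_order all_algebra zify.
Set Implicit Arguments.
Unset Strict Implicit.
Unset Printing Implicit Defensive.

Import Order.TTheory GRing.Theory Num.Theory.
Local Open Scope ring_scope.

Definition lsupport (f : laurent) (k : int) : Prop := lcoef f k != 0%N.

Definition two_points (A : int -> Prop) : Prop :=
  exists a1 a2, [/\ A a1, A a2 & a1 < a2].

Definition is_sumset (S A B : int -> Prop) : Prop :=
  forall s, S s <-> exists a b, [/\ A a, B b & s = a + b].

Lemma coefM_nat_neq0 (p q : {poly nat}) n :
  reflect (exists i j, [/\ n = (i + j)%N, p`_i != 0%N & q`_j != 0%N])
          ((p * q)`_n != 0%N).
Proof.
rewrite coefM sum_nat_seq_neq0; apply: (iffP hasP) => [[/= j _]|[i [j [-> pi qj]]]].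
  rewrite muln_eq0 negb_or => /andP[pj qj].
  by exists j, (n - j)%N; split => //; have := ltn_ord j; lia.
have lt_i : (i < (i + j).+1)%N by lia.
exists (Ordinal lt_i); first by rewrite mem_index_enum.
by rewrite /= muln_eq0 negb_or addKn pi qj.
Qed.

Lemma lcoef_neq0 (f : laurent) k :
  reflect (exists2 i : nat, k = Defs.lshift f + i%:Z & (lpoly f)`_i != 0%N)
          (lcoef f k != 0%N).
Proof.
rewrite /lcoef; case E: (k - Defs.lshift f) => [i|i]; apply: (iffP idP) => //.
- by move=> fi; exists i => //; lia.
- by move=> [j kE fj]; have -> : i = j by lia.
- by move=> [j kE _]; move: E; rewrite kE NegzE; lia.
Qed.

Lemma lsupport_lmul (g h : laurent) :
  is_sumset (lsupport (lmul g h)) (lsupport g) (lsupport h).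
Proof.
move=> s; rewrite /lsupport; split.
- move=> /lcoef_neq0[n -> /coefM_nat_neq0[i [j [-> gi hj]]]].
  exists (Defs.lshift g + i%:Z), (Defs.lshift h + j%:Z).
  by split; [apply/lcoef_neq0; exists i | apply/lcoef_neq0; exists j | rewrite /=; lia].
- move=> [a [b [/lcoef_neq0[i -> gi] /lcoef_neq0[j -> hj] ->]]].
  apply/lcoef_neq0; exists (i + j)%N; first by rewrite /=; lia.
  by apply/coefM_nat_neq0; exists i, j.
Qed.

Lemma mem_lsupp (f : laurent) k : (k \in lsupp f) = (lcoef f k != 0%N).
Proof.
rewrite mem_rev; apply/mapP/lcoef_neq0 => -[i].
  by rewrite mem_filter => /andP[fi _] ->; exists i.
move=> -> fi; exists i => //; rewrite mem_filter fi mem_iota leq0n add0n /= ltnNge.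
by apply: contra fi => le; rewrite nth_default.
Qed.

Lemma lsupp_sorted (f : laurent) : sorted >%R (lsupp f).
Proof.
rewrite rev_sorted sorted_map.
apply: (sub_sorted _ (sorted_filter ltn_trans _ (iota_ltn_sorted 0 _))).
by move=> i j /=; rewrite /relpre /=; lia.
Qed.

Lemma monomial_or_two_points (f : laurent) :
  lnonzero f -> is_monomial f \/ two_points (lsupport f).
Proof.
move=> [k fk]; move: (mem_lsupp f) (lsupp_sorted f).
case: (lsupp f) => [|k1 [|k2 ks]] memf srt.
- by move: fk; rewrite -memf.
- left; exists (lcoef f k1), k1; split; first by rewrite lt0n -memf inE.
  move=> i; case: (eqVneq i k1) => [-> //|ne].
  by apply/eqP; rewrite -[_ == _]negbK -memf inE ne.
- right; exists k2, k1; rewrite /lsupport -!memf !inE !eqxx orbT.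
  by move: srt => /= /andP[].
Qed.

Lemma two_points_opp (A : int -> Prop) : two_points A -> two_points (A \o -%R).
Proof. by move=> [a1 [a2 [A1 A2 lt12]]]; exists (- a2), (- a1); rewrite /= !opprK ltrN2. Qed.

Lemma is_sumset_opp (S A B : int -> Prop) :
  is_sumset S A B -> is_sumset (S \o -%R) (A \o -%R) (B \o -%R).
Proof.
move=> sumS s /=; rewrite sumS; split=> -[a [b [Aa Bb sE]]].
  by exists (- a), (- b); rewrite !opprK; split=> //; lia.
by exists (- a), (- b); split=> //; lia.
Qed.

Section SumsetGap.
Variables S A B : int -> Prop.
Hypotheses (sumS : is_sumset S A B) (A2 : two_points A) (B2 : two_points B).

Lemma sumset_top_gap t0 t1 :
  S t0 -> (forall s, S s -> s <= t0) -> S t1 -> t1 < t0 ->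
  exists x y, [/\ S x, S y, y < x, x < t0 & x - y <= t0 - t1].
Proof.
move=> St0 maxS St1 lt_t10.
have Sab a b : A a -> B b -> S (a + b) by move=> Aa Bb; apply/sumS; exists a, b.
have [a' [b' [Aa' Bb' t0E]]] := (sumS t0).1 St0.
have [a [b [Aa Bb t1E]]] := (sumS t1).1 St1.
have [a1 [a2 [Aa1 Aa2 lt_a12]]] := A2.
have [b1 [b2 [Bb1 Bb2 lt_b12]]] := B2.
have [lt_aa'|le_a'a] := ltP a a'.
  exists (a' + b1), (a + b1); split; [exact: Sab | exact: Sab | lia | |].
  - by have := maxS _ (Sab _ _ Aa' Bb2); lia.
  - by have := maxS _ (Sab _ _ Aa' Bb); lia.
exists (a1 + b'), (a1 + b); split; [exact: Sab | exact: Sab | lia | |].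
- by have := maxS _ (Sab _ _ Aa2 Bb'); lia.
- by have := maxS _ (Sab _ _ Aa Bb'); lia.
Qed.

End SumsetGap.

Lemma sumset_bottom_gap (S A B : int -> Prop) t0 t1 :
  is_sumset S A B -> two_points A -> two_points B ->
  S t0 -> (forall s, S s -> t0 <= s) -> S t1 -> t0 < t1 ->
  exists x y, [/\ S x, S y, y < x, t0 < y & x - y <= t1 - t0].
Proof.
move=> sumS A2 B2 St0 minS St1 lt_t01.
have [||||x [y [Sx Sy lt_yx lt_xt0 gap]]] :=
  sumset_top_gap (is_sumset_opp sumS) (two_points_opp A2) (two_points_opp B2)
    (t0 := - t0) (t1 := - t1).
- by rewrite /= opprK.
- by move=> s /minS; lia.
- by rewrite /= opprK.
- by rewrite ltrN2.
- by exists (- y), (- x); split=> //=; lia.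
Qed.

Section DecreasingSeq.
Context {disp : Order.disp_t} {T : porderType disp} (x0 : T) (s : seq T).
Hypothesis s_decr : sorted >%O s.

Lemma gt_sorted_leq_nth :
  {in [pred n | (n < size s)%N] &, {mono nth x0 s : i j / (i <= j)%N >-> (j <= i)%O}}.
Proof. exact: (@lt_sorted_leq_nth _ T^d x0 s). Qed.

Lemma gt_sorted_ltn_nth :
  {in [pred n | (n < size s)%N] &, {mono nth x0 s : i j / (i < j)%N >-> (j < i)%O}}.
Proof. exact: (@lt_sorted_ltn_nth _ T^d x0 s). Qed.

Lemma gt_sorted_le_head x : x \in s -> (x <= nth x0 s 0)%O.
Proof.
move=> sx; rewrite -(nth_index x0 sx) gt_sorted_leq_nth ?inE ?index_mem //.
by case: (s) sx.
Qed.

Lemma gt_sorted_last_le x : x \in s -> (nth x0 s (size s).-1 <= x)%O.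
Proof.
move=> sx; have s_gt0 : (0 < size s)%N by case: (s) sx.
rewrite -(nth_index x0 sx) gt_sorted_leq_nth ?inE ?index_mem ?prednK //.
by rewrite -ltnS prednK // index_mem.
Qed.

Lemma gt_sorted_consecutive x y : x \in s -> y \in s -> (y < x)%O ->
  exists2 i, (i.+1 < size s)%N & nth x0 s i = x /\ (y <= nth x0 s i.+1)%O.
Proof.
move=> sx sy; rewrite -(nth_index x0 sx) -(nth_index x0 sy).
have ix : (index x s < size s)%N by rewrite index_mem.
have iy : (index y s < size s)%N by rewrite index_mem.
rewrite gt_sorted_ltn_nth ?inE // => lt_xy.
have ix1 : ((index x s).+1 < size s)%N := leq_ltn_trans lt_xy iy.
by exists (index x s) => //; rewrite gt_sorted_leq_nth ?inE.
Qed.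

End DecreasingSeq.

Section LaurentGap.
Variables (f : laurent) (A B : int -> Prop).
Hypotheses (sumf : is_sumset (lsupport f) A B) (A2 : two_points A) (B2 : two_points B).
Hypothesis lsupp_gt1 : (1 < size (lsupp f))%N.
Local Notation ks := (lsupp f).

Let ks_supp i : (i < size ks)%N -> lsupport f (nth 0 ks i).
Proof. by move=> lt_i; rewrite /lsupport -mem_lsupp mem_nth. Qed.

Let ks_sorted := lsupp_sorted f.

Let ks_gt_nth i j : (i < j < size ks)%N -> nth 0 ks j < nth 0 ks i.
Proof.
by move=> /andP[lt_ij lt_j]; rewrite gt_sorted_ltn_nth ?inE // (ltn_trans lt_ij).
Qed.

Lemma lsupp_top_gap : exists2 i, (0 < i)%N /\ (i.+1 < size ks)%N &
  nth 0 ks i - nth 0 ks i.+1 <= nth 0 ks 0 - nth 0 ks 1.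
Proof.
have [||||x [y [fx fy lt_yx lt_xt0 gap]]] := sumset_top_gap sumf A2 B2
  (t0 := nth 0 ks 0) (t1 := nth 0 ks 1).
- by apply: ks_supp; lia.
- by move=> s; rewrite /lsupport -mem_lsupp; apply: gt_sorted_le_head.
- exact: ks_supp.
- by apply: ks_gt_nth; lia.
have [||i lt_i1 [xE le_yi1]] := gt_sorted_consecutive 0 ks_sorted _ _ lt_yx.
- by rewrite mem_lsupp.
- by rewrite mem_lsupp.
exists i; last by rewrite -xE in gap; exact: le_trans (lerB (lexx _) le_yi1) gap.
by split=> //; rewrite lt0n; apply: contraTneq lt_xt0 => i0; rewrite -xE i0 ltxx.
Qed.

Lemma lsupp_bottom_gap : exists2 j, (j.+2 < size ks)%N &
  nth 0 ks j - nth 0 ks j.+1 <= nth 0 ks (size ks - 2) - nth 0 ks (size ks - 1).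
Proof.
have [||||x [y [fx fy lt_yx lt_t0y gap]]] := sumset_bottom_gap sumf A2 B2
  (t0 := nth 0 ks (size ks - 1)) (t1 := nth 0 ks (size ks - 2)).
- by apply: ks_supp; lia.
- by move=> s; rewrite /lsupport -mem_lsupp subn1; apply: gt_sorted_last_le.
- by apply: ks_supp; lia.
- by apply: ks_gt_nth; lia.
have [||j lt_j1 [xE le_yj1]] := gt_sorted_consecutive 0 ks_sorted _ _ lt_yx.
- by rewrite mem_lsupp.
- by rewrite mem_lsupp.
exists j; last by rewrite -xE in gap; exact: le_trans (lerB (lexx _) le_yj1) gap.
rewrite ltn_neqAle lt_j1 andbT; apply: contraTneq lt_t0y => jE.
by rewrite -leNgt; apply: le_trans le_yj1 _; rewrite -jE subn1.
Qed.

End LaurentGap.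

Theorem lemma2p6 (f : laurent) : hyper_monolithic f -> monolithic f.
Proof.
move=> [lsupp_gt1 gaps].
have f_top : lsupport f (nth 0 (lsupp f) 0).
  by rewrite /lsupport -mem_lsupp mem_nth // ltnW.
split; first by exists (nth 0 (lsupp f) 0).
move=> g h fE.
have sumf : is_sumset (lsupport f) (lsupport g) (lsupport h).
  by move=> s; rewrite /lsupport fE; exact: lsupport_lmul.
have [a [b [ga hb _]]] := (sumf _).1 f_top.
have [|g2] := monomial_or_two_points (ex_intro _ a ga); first by left.
have [|h2] := monomial_or_two_points (ex_intro _ b hb); first by right.
exfalso; case: gaps => [top_gap|bottom_gap].
- have [i [i_gt0 lt_i1] le_gap] := lsupp_top_gap sumf g2 h2 lsupp_gt1.
  by have := top_gap i i_gt0 lt_i1; rewrite ltNge le_gap.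
- have [j lt_j2 le_gap] := lsupp_bottom_gap sumf g2 h2 lsupp_gt1.
  by have := bottom_gap j lt_j2; rewrite ltNge le_gap.
Qed.
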